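(* Let $\mathbb{K}$ be a field and let $\mathcal F=\{f_n(q)\}_{n=1}^\infty$ be a nonzero solution (i.e. $f_n\neq 0$ for some $n$) of the functional equation $f_{mn}(q)=f_m(q)f_n(q^m)$ for all $m,n\in\mathbb N$, with $f_n(q)\in\mathbb{K}[q]$. Then: (i) $f_1(q)=1$; (ii) $f_m(q)f_n(q^m)=f_n(q)f_m(q^n)$ for all $m,n\in\mathbb N$; (iii) writing each $f_n$ with $n\in\mathrm{supp}(\mathcal F)$ uniquely as $f_n(q)=a(n)q^{v(f_n)}g_n(q)$ with $a(n)\in\mathbb{K}\setminus\{0\}$, $v(f_n)\in\mathbb N_0$ and $g_n(q)\in\mathbb{K}[q]$ with $g_n(0)=1$, and setting $a(n)=0$, $g_n(q)=0$ for $n\notin\mathrm{supp}(\mathcal F)$, one has $a(mn)=a(m)a(n)$ for all $m,n\in\mathrm{supp}(\mathcal F)$; there is a nonnegative rational number $t$ with $v(f_n)=t(n-1)$ for all $n\in\mathrm{supp}(\mathcal F)$; and $\mathcal G=\{g_n(q)\}_{n=1}^\infty$ is again a solution of the same functional equation with $\mathrm{supp}(\mathcal G)=\mathrm{supp}(\mathcal F)$; (iv) there is a nonnegative rational number $s$ with $\deg(f_n)=s(n-1)$ for all $n\in\mathrm{supp}(\mathcal F)$.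
   Context: $\mathbb N=\{1,2,3,\dots\}$, $\mathbb N_0=\mathbb N\cup\{0\}$. $\mathrm{supp}(\mathcal F)=\{n\in\mathbb N: f_n(q)\ne0\}$. For a nonzero polynomial $f$, $v(f)$ is the smallest exponent of $q$ occurring in $f$ with nonzero coefficient. *)

From HB Require Import structures.
From mathcomp Require Import all_boot all_order all_algebra.
Set Implicit Arguments. Unset Strict Implicit. Unset Printing Implicit Defensive.
Import Order.TTheory GRing.Theory Num.Theory.
Local Open Scope ring_scope.

(* The functional equation f_{mn}(q) = f_m(q) f_n(q^m) for all m, n in N = {1,2,...}.
   Sequences are indexed by nat; the value at index 0 is irrelevant. *)
Definition is_solution (K : fieldType) (f : nat -> {poly K}) : Prop :=
  forall m n : nat, (0 < m)%N -> (0 < n)%N -> f (m * n)%N = f m * (f n \Po 'X^m).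

Definition in_supp (K : fieldType) (f : nat -> {poly K}) (n : nat) : bool :=
  (0 < n)%N && (f n != 0).

Definition vq (K : fieldType) (p : {poly K}) : nat := find (fun c => c != 0) p.

Definition decomposition (K : fieldType) (f : nat -> {poly K})
    (a : nat -> K) (g : nat -> {poly K}) : Prop :=
  forall n : nat, (0 < n)%N ->
    if in_supp f n then
      [/\ f n = a n *: ('X^(vq (f n)) * g n), a n != 0 & (g n).[0] = 1]
    else a n = 0 /\ g n = 0.

From HB Require Import structures.
From mathcomp Require Import all_boot all_order all_algebra.
From mathcomp Require Import zify.
From Stdlib Require Import Classical.
Import Order.TTheory GRing.Theory Num.Theory.
Local Open Scope ring_scope.
Set Implicit Arguments. Unset Strict Implicit.

(** Substituting [q^m] into [q^k h(q)] multiplies the valuation by [m] and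
    keeps the constant term of [h]; degrees behave in the same way.  Since a
    polynomial is uniquely [q^k h] with [h(0) <> 0], the functional equation
    makes the lowest coefficient [a] multiplicative, passes to the normalized
    parts [g_n], and gives valuation and degree the form [d(mn) = d(m) + m d(n)].
    Comparing [d(mn)] with [d(nm)] yields [d(m)(n-1) = d(n)(m-1)], so
    [d(n)/(n-1)] is a constant. *)

Section Valuation.

Variable K : fieldType.
Implicit Types (p h : {poly K}) (k : nat).

Lemma vq_XnM k h : h`_0 != 0 -> vq ('X^k * h) = k.
Proof.
move=> h0; elim: k => [|k IHk].
  by rewrite mul1r /vq; case: (polyseq h) h0 => [|c s] /=; rewrite ?eqxx // => ->.
have nz : 'X^k * h != 0.
  by apply: contraNneq h0 => /(congr1 (coefp k)); rewrite /= coefXnM ltnn subnn coef0 => ->.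
by rewrite exprS -mulrA mulrC /vq polyseqMX //= eqxx /= -/(vq _) IHk.
Qed.

Lemma vq_decompose p : p != 0 ->
  p = 'X^(vq p) * drop_poly (vq p) p /\ (drop_poly (vq p) p)`_0 != 0.
Proof.
move=> p0; rewrite coef_drop_poly add0n.
have hasp : has (fun c => c != 0) p.
  apply/hasP; exists (lead_coef p); last by rewrite lead_coef_eq0.
  by rewrite lead_coefE mem_nth // ltn_predL size_poly_gt0.
split; last exact: (nth_find 0 hasp).
have low0 : take_poly (vq p) p = 0.
  apply/polyP => i; rewrite coef_take_poly coef0.
  by case: ifP => // /(before_find 0) /negbFE /eqP.
by rewrite -[p in LHS](poly_take_drop (vq p)) low0 add0r mulrC.
Qed.

Lemma XnM_inj k1 k2 h1 h2 : h1`_0 != 0 -> h2`_0 != 0 ->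
  'X^k1 * h1 = 'X^k2 * h2 -> k1 = k2 /\ h1 = h2.
Proof.
move=> h10 h20 E; have Ek : k1 = k2 by rewrite -(vq_XnM k1 h10) E vq_XnM.
split=> //; apply: (@mulfI _ 'X^k1); last by rewrite E Ek.
by rewrite -size_poly_eq0 size_polyXn.
Qed.

Lemma XnM_comp k h m : ('X^k * h) \Po 'X^m = 'X^(k * m) * (h \Po 'X^m).
Proof. by rewrite comp_polyM comp_Xn_poly mulnC exprM. Qed.

Lemma coef0_comp_Xn h m : (0 < m)%N -> (h \Po 'X^m)`_0 = h`_0.
Proof. by move=> m0; rewrite coef_comp_poly_Xn // dvdn0 div0n. Qed.

End Valuation.

Lemma twisted_additive_linear (S : pred nat) (d : nat -> nat) :
  (forall n, S n -> (0 < n)%N) ->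
  (forall m n, S m -> S n -> d (m * n)%N = (d m + d n * m)%N) ->
  exists t : rat, 0 <= t /\ forall n, S n -> (d n)%:R = t * (n.-1)%:R.
Proof.
move=> Spos dM.
have cross m n : S m -> S n -> (d m * n.-1 = d n * m.-1)%N.
  move=> Sm Sn; have := dM _ _ Sm Sn; rewrite mulnC dM //.
  have := prednK (Spos _ Sm); have := prednK (Spos _ Sn); nia.
have [[n0 [Sn0 n0_gt1]]|no_gt1] := classic (exists n0, S n0 /\ (1 < n0)%N).
  exists ((d n0)%:R / (n0.-1)%:R); split; first by rewrite divr_ge0.
  move=> n Sn; have n0_1 : (n0.-1)%:R != 0 :> rat by rewrite pnatr_eq0; lia.
  by rewrite mulrAC -natrM cross // natrM mulfK.
exists 0; split=> // n Sn; rewrite mul0r.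
have n1 : n = 1%N.
  apply/eqP; rewrite eqn_leq Spos // andbT leqNgt.
  by apply/negP => n_gt1; apply: no_gt1; exists n.
subst n; have d1 : d 1%N = 0%N by have := dM _ _ Sn Sn; rewrite muln1; lia.
by rewrite d1.
Qed.

Lemma decomposition_exists (K : fieldType) (f : nat -> {poly K}) :
  exists (a : nat -> K) (g : nat -> {poly K}), decomposition f a g.
Proof.
pose c n := (f n)`_(vq (f n)).
exists (fun n => if in_supp f n then c n else 0),
  (fun n => if in_supp f n then (c n)^-1 *: drop_poly (vq (f n)) (f n) else 0).
move=> n _; case Sn: (in_supp f n); last by [].
have [E c0] := vq_decompose (proj2 (andP Sn)).
rewrite coef_drop_poly add0n -/(c n) in c0.
split=> //; first by rewrite -scalerAr scalerA mulfV // scale1r -E.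
by rewrite hornerZ horner_coef0 coef_drop_poly add0n mulVf.
Qed.

Section Solution.

Variables (K : fieldType) (f : nat -> {poly K}).
Hypothesis solf : is_solution f.

Lemma in_supp_gt0 n : in_supp f n -> (0 < n)%N.
Proof. by case/andP. Qed.

Lemma in_suppM m n : (0 < m)%N -> (0 < n)%N ->
  in_supp f (m * n) = in_supp f m && in_supp f n.
Proof.
move=> m0 n0; rewrite /in_supp muln_gt0 m0 n0 solf // mulf_eq0 negb_or.
by rewrite comp_poly_eq0 // size_polyXn ltnS.
Qed.

Lemma solution_f1 : (exists n, (0 < n)%N /\ f n != 0) -> f 1%N = 1.
Proof.
case=> n [n0 fn0]; have f1_0 : f 1%N != 0.
  by apply: contraNneq fn0 => f1_0; rewrite -[n]mul1n solf // f1_0 mul0r.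
have := solf (m := 1) (n := 1) isT isT; rewrite muln1 expr1 comp_polyXr => E.
by apply: (mulfI f1_0); rewrite mulr1 -E.
Qed.

Lemma solution_sym m n : (0 < m)%N -> (0 < n)%N ->
  f m * (f n \Po 'X^m) = f n * (f m \Po 'X^n).
Proof. by move=> m0 n0; rewrite -!solf // mulnC. Qed.

Lemma deg_solutionM m n : in_supp f m -> in_supp f n ->
  (size (f (m * n)%N)).-1 = ((size (f m)).-1 + (size (f n)).-1 * m)%N.
Proof.
move=> /andP[m0 fm0] /andP[n0 fn0].
have fnX0 : f n \Po 'X^m != 0 by rewrite comp_poly_eq0 // size_polyXn ltnS.
have := size_comp_poly (f n) 'X^m; rewrite size_polyXn /= solf // size_mul //.
have := size_poly_gt0 (f m); have := size_poly_gt0 (f n \Po 'X^m).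
rewrite fm0 fnX0; case: (size (f n \Po _)) => // y _; case: (size (f m)) => // x _.
by rewrite addnS /= => ->.
Qed.

Section Decomposition.

Variables (a : nat -> K) (g : nat -> {poly K}).
Hypothesis decf : decomposition f a g.

Lemma decomposition_supp n : in_supp f n ->
  [/\ f n = 'X^(vq (f n)) * (a n *: g n), (a n *: g n)`_0 = a n & a n != 0].
Proof.
move=> Sn; have := decf (in_supp_gt0 Sn); rewrite Sn => -[E an g0].
by rewrite coefZ -horner_coef0 g0 mulr1 -scalerAr.
Qed.

Lemma decompositionM m n : in_supp f m -> in_supp f n ->
  [/\ vq (f (m * n)%N) = (vq (f m) + vq (f n) * m)%N, a (m * n)%N = a m * a n
    & g (m * n)%N = g m * (g n \Po 'X^m)].
Proof.
move=> Sm Sn; have [m0 n0] := (in_supp_gt0 Sm, in_supp_gt0 Sn).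
have Smn : in_supp f (m * n) by rewrite in_suppM // Sm.
have [Em cm am] := decomposition_supp Sm; have [En cn an] := decomposition_supp Sn.
have [Emn cmn amn] := decomposition_supp Smn.
set h := (a m *: g m) * ((a n *: g n) \Po 'X^m).
have ch : h`_0 = a m * a n by rewrite coef0M coef0_comp_Xn // cm cn.
have Ef : f (m * n)%N = 'X^(vq (f m) + vq (f n) * m) * h.
  by rewrite solf // {1}Em {1}En XnM_comp exprD mulrACA.
have [Ev Eh] : vq (f (m * n)%N) = (vq (f m) + vq (f n) * m)%N /\
    a (m * n)%N *: g (m * n)%N = h.
  by apply: XnM_inj; rewrite ?cmn ?ch ?mulf_neq0 // -Emn.
have Ea : a (m * n)%N = a m * a n by rewrite -cmn Eh.
split=> //; apply: (scalerI (mulf_neq0 am an)).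
by rewrite -Ea Eh Ea /h comp_polyZ -scalerAr -scalerAl scalerA mulrC.
Qed.

Lemma decomposition_in_supp n : in_supp g n = in_supp f n.
Proof.
case: (posnP n) => [->|n0]; first by [].
have := decf n0; case: ifP => Sn.
  case=> _ _ g0; rewrite /in_supp n0; apply: contra_eq_neq g0 => ->.
  by rewrite horner0 eq_sym oner_eq0.
by case=> _ g0; rewrite /in_supp g0 eqxx andbF.
Qed.

Lemma decomposition_solution : is_solution g.
Proof.
have g0 k : (0 < k)%N -> ~~ in_supp f k -> g k = 0.
  by move=> k0 nSk; have := decf k0; rewrite (negbTE nSk) => -[].
move=> m n m0 n0; case: (boolP (in_supp f m && in_supp f n)) => [/andP[Sm Sn]|nS].
  by case: (decompositionM Sm Sn).
have nSmn : ~~ in_supp f (m * n) by rewrite in_suppM.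
rewrite (g0 _ _ nSmn); last by rewrite muln_gt0 m0.
by case/nandP: nS => [/(g0 _ m0) ->|/(g0 _ n0) ->]; rewrite ?mul0r // comp_poly0 mulr0.
Qed.

End Decomposition.

End Solution.

Unset Implicit Arguments. Set Strict Implicit.

Theorem mainTheorem7 (K : fieldType) (f : nat -> {poly K}) :
  is_solution f ->
  (exists n : nat, (0 < n)%N /\ f n != 0) ->
  [/\ (* (i) *) f 1%N = 1,
      (* (ii) *) (forall m n : nat, (0 < m)%N -> (0 < n)%N ->
                   f m * (f n \Po 'X^m) = f n * (f m \Po 'X^n)),
      (* (iii) *)
      (exists (a : nat -> K) (g : nat -> {poly K}), decomposition f a g) /\
      (forall (a : nat -> K) (g : nat -> {poly K}), decomposition f a g ->
         [/\ (forall m n : nat, in_supp f m -> in_supp f n -> a (m * n)%N = a m * a n),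
             (exists t : rat, 0 <= t /\
                forall n : nat, in_supp f n -> ((vq (f n))%:R : rat) = t * (n.-1)%:R),
             is_solution g
           & (forall n : nat, in_supp g n = in_supp f n)]) &
      (* (iv) *)
      exists s : rat, 0 <= s /\
        forall n : nat, in_supp f n -> (((size (f n)).-1)%:R : rat) = s * (n.-1)%:R].
Proof.
move=> solf nontrivial; split.
- exact: solution_f1.
- exact: solution_sym.
- split; first exact: decomposition_exists.
  move=> a g decf; split.
  + by move=> m n Sm Sn; case: (decompositionM solf decf Sm Sn).
  + apply: (@twisted_additive_linear (in_supp f) (fun n => vq (f n))).
      exact: in_supp_gt0.
    by move=> m n Sm Sn; case: (decompositionM solf decf Sm Sn).
  + exact: decomposition_solution decf.
  + exact: decomposition_in_supp decf.
- apply: (@twisted_additive_linear (in_supp f) (fun n => (size (f n)).-1)).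
    exact: in_supp_gt0.
  exact: deg_solutionM.
Qed.
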